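(* Let $D$ be a square-free integer with $D\equiv 2\pmod 4$, let $\mathbb{Z}[\sqrt{D}]=\{x+y\sqrt D: x,y\in\mathbb{Z}\}$, and suppose that $2$ is irreducible but not prime in $\mathbb{Z}[\sqrt{D}]$. Let $z=z_1+z_2\sqrt{D}\in I_2(D)$ with $\lVert z\rVert=2k$ for some integer $k\equiv 3\pmod 4$. Then $A(2,z)$ has property (CZ) if and only if the quadratic Diophantine equation $$0=(2+k)b_1^2-(2+k)Db_2^2-2z_1b_1+2z_2Db_2-2$$ has an integer solution $(b_1,b_2)$.
   Context: $\bar z=z_1-z_2\sqrt D$ is the conjugate and $\lVert z\rVert=z\bar z=z_1^2-Dz_2^2$ the norm. $I_2(D)$ is the set of all non-unit $z\in\mathbb{Z}[\sqrt{D}]$ such that $z\notin\langle 2\rangle$ but there exists $m\notin\langle 2\rangle$ with $zm\in\langle 2\rangle$. $A(2,z)=\begin{pmatrix} 2 & z\\ \bar z & \lVert z\rVert/2\end{pmatrix}$. A matrix $A(p,z)$ has property (CZ) if there exist $a,b,c\in\mathbb{Z}[\sqrt{D}]$ with $a(1-a)=bc$ such that $A(p,z)=\begin{pmatrix} a&b\\ c&1-a\end{pmatrix}\begin{pmatrix}\bar a&\bar c\\ \bar b&1-\bar a\end{pmatrix}$. *)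

From mathcomp Require Import all_boot all_order all_algebra.
Set Implicit Arguments. Unset Strict Implicit. Unset Printing Implicit Defensive.
Import Order.TTheory GRing.Theory Num.Theory.
Local Open Scope ring_scope.

(* elements of Z[sqrt D] : z = z.1 + z.2 sqrt D *)
Definition zsqrt := (int * int)%type.

Definition zs (a : int) : zsqrt := (a, 0).
Definition zadd (x y : zsqrt) : zsqrt := (x.1 + y.1, x.2 + y.2).
Definition zopp (x : zsqrt) : zsqrt := (- x.1, - x.2).
Definition zsub (x y : zsqrt) : zsqrt := zadd x (zopp y).
Definition zmul (D : int) (x y : zsqrt) : zsqrt :=
  (x.1 * y.1 + D * x.2 * y.2, x.1 * y.2 + x.2 * y.1).
Definition zconj (x : zsqrt) : zsqrt := (x.1, - x.2).
Definition znorm (D : int) (x : zsqrt) : int := x.1 ^+ 2 - D * x.2 ^+ 2.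

Definition zunit (D : int) (x : zsqrt) : Prop := exists w, zmul D x w = zs 1.
Definition zdvd (D : int) (x y : zsqrt) : Prop := exists w, y = zmul D x w.
Definition in_ideal2 (D : int) (x : zsqrt) : Prop := zdvd D (zs 2) x.

Definition zirreducible (D : int) (p : zsqrt) : Prop :=
  p <> zs 0 /\ ~ zunit D p /\
  forall x y, p = zmul D x y -> zunit D x \/ zunit D y.
Definition zprime (D : int) (p : zsqrt) : Prop :=
  p <> zs 0 /\ ~ zunit D p /\
  forall x y, zdvd D p (zmul D x y) -> zdvd D p x \/ zdvd D p y.

Definition squarefree (D : int) : Prop :=
  forall n : nat, (n ^ 2 %| `|D|)%N -> n = 1%N.

Definition I2 (D : int) (z : zsqrt) : Prop :=
  ~ zunit D z /\ ~ in_ideal2 D z /\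
  exists m, ~ in_ideal2 D m /\ in_ideal2 D (zmul D z m).

(* 2x2 matrices over Z[sqrt D], given by their entries (m11, m12, m21, m22) *)
Definition mat2 := (zsqrt * zsqrt * zsqrt * zsqrt)%type.
Definition mk2 (a b c d : zsqrt) : mat2 := (a, b, c, d).
Definition mmul2 (D : int) (M N : mat2) : mat2 :=
  let: (a, b, c, d) := M in let: (e, f, g, h) := N in
  mk2 (zadd (zmul D a e) (zmul D b g)) (zadd (zmul D a f) (zmul D b h))
      (zadd (zmul D c e) (zmul D d g)) (zadd (zmul D c f) (zmul D d h)).

Definition A2 (D : int) (z : zsqrt) : mat2 :=
  mk2 (zs 2) z (zconj z) (zs (znorm D z %/ 2)%Z).

Definition CZ (D : int) (A : mat2) : Prop :=
  exists a b c : zsqrt,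
    zmul D a (zsub (zs 1) a) = zmul D b c /\
    A = mmul2 D (mk2 a b c (zsub (zs 1) a))
                (mk2 (zconj a) (zconj c) (zconj b) (zsub (zs 1) (zconj a))).

(* Write M = [[a, b], [c, 1 - a]].  The condition a (1 - a) = b c says that M
   is idempotent, so A = M M^* gives M A = A, whose first column reads
   b zbar = 2 - 2 a and 2 c = a zbar.  Under these relations, multiplying by 2
   and using z zbar = 2 k turns the (1,1) entry a abar + b bbar = 2 into
   (2 + k) b bbar - (b zbar + bbar z) - 2 = 0, whose rational part is the
   Diophantine equation and whose sqrt D part vanishes identically; the other
   entries then follow.  Conversely, D = 2 (mod 4) and k odd force z1, b1 even
   and z2, b2 odd, which is exactly what makes a = 1 - b zbar / 2 and
   c = a zbar / 2 lie in Z[sqrt D]. *)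

From HB Require Import structures.
From mathcomp Require Import all_boot all_order all_algebra.
From mathcomp Require Import ring zify.
Import Order.TTheory GRing.Theory Num.Theory.
Set Implicit Arguments. Unset Strict Implicit. Unset Printing Implicit Defensive.
Local Open Scope ring_scope.

(* [zsqrt] already carries MathComp's componentwise product ring structure, so
   the ring Z[sqrt D] lives on the copy [zring D], and conjugation is restated
   as [conjz] on it so that its argument is elaborated in Z[sqrt D]. *)
Definition zring (D : int) : Type := zsqrt.

Section ZsqrtRing.
Variable D : int.

HB.instance Definition _ := Choice.copy (zring D) zsqrt.

Lemma zaddA : associative (zadd : zring D -> zring D -> zring D).
Proof. by case=> ? ? [? ?] [? ?]; rewrite /zadd /= !addrA. Qed.

Lemma zaddC : commutative (zadd : zring D -> zring D -> zring D).
Proof. by case=> ? ? [? ?]; rewrite /zadd /= [_ + _]addrC [X in (_, X)]addrC. Qed.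

Lemma zadd0z : left_id (zs 0 : zring D) zadd.
Proof. by case=> ? ?; rewrite /zadd /= !add0r. Qed.

Lemma zaddNz : left_inverse (zs 0 : zring D) zopp zadd.
Proof. by case=> ? ?; rewrite /zadd /= !addNr. Qed.

HB.instance Definition _ :=
  GRing.isZmodule.Build (zring D) zaddA zaddC zadd0z zaddNz.

Lemma zmulA : associative (zmul D : zring D -> zring D -> zring D).
Proof. by case=> ? ? [? ?] [? ?]; congr pair; rewrite /=; ring. Qed.

Lemma zmulC : commutative (zmul D : zring D -> zring D -> zring D).
Proof. by case=> ? ? [? ?]; congr pair; rewrite /=; ring. Qed.

Lemma zmul1z : left_id (zs 1 : zring D) (zmul D).
Proof. by case=> ? ?; congr pair; rewrite /=; ring. Qed.

Lemma zmulDl : left_distributive (zmul D : zring D -> zring D -> zring D) zadd.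
Proof. by case=> ? ? [? ?] [? ?]; congr pair; rewrite /=; ring. Qed.

Lemma zs1_neq0 : (zs 1 : zring D) != zs 0.
Proof. by []. Qed.

HB.instance Definition _ := GRing.Zmodule_isComNzRing.Build (zring D)
  zmulA zmulC zmul1z zmulDl zs1_neq0.

Definition conjz : zring D -> zring D := zconj.

Lemma conjz_is_zmod_morphism : zmod_morphism conjz.
Proof. by case=> ? ? [? ?]; rewrite /conjz /zconj /= opprD. Qed.

Lemma conjz_is_monoid_morphism : monoid_morphism conjz.
Proof.
split; first by rewrite /conjz /zconj /= oppr0.
by case=> ? ? [? ?]; congr pair; rewrite /=; ring.
Qed.

HB.instance Definition _ := GRing.isZmodMorphism.Build (zring D) (zring D) conjz
  conjz_is_zmod_morphism.
HB.instance Definition _ := GRing.isMonoidMorphism.Build (zring D) (zring D) conjz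
  conjz_is_monoid_morphism.

Lemma conjzK : involutive conjz.
Proof. by case=> ? ?; rewrite /conjz /zconj /= opprK. Qed.

Lemma lreg2z : GRing.lreg (2 : zring D).
Proof. by case=> ? ? [? ?] [? ?]; congr pair; lia. Qed.

Lemma mul_conjz (z : zring D) (k : int) :
  znorm D z = 2 * k -> z * conjz z = 2 * (zs k : zring D).
Proof. by case: z => ? ?; rewrite /znorm /= => nz; congr pair; rewrite /=; lia. Qed.

Lemma zring_halve (x : zring D) :
  (2 %| x.1)%Z -> (2 %| x.2)%Z -> exists y, x = 2 * y.
Proof.
case: x => x1 x2 /= /dvdzP[y1 ->] /dvdzP[y2 ->].
by exists (y1, y2); congr pair; rewrite /=; ring.
Qed.

End ZsqrtRing.

Arguments conjzK {D}.
Arguments lreg2z {D}.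

Definition cz_form (R : comRingType) (conj : R -> R) (z k b : R) : R :=
  (2 + k) * (b * conj b) - (b * conj z + conj b * z) - 2.

Section CZFactorization.
Variables (R : comRingType) (conj : {rmorphism R -> R}).
Hypotheses (conjK : involutive conj) (reg2 : GRing.lreg (2 : R)).
Variables (z k : R).
Hypothesis normz : z * conj z = 2 * k.

Local Notation cz_form := (cz_form conj z k).

(* The (1,1) entry of M A = A, for idempotent M. *)
Lemma cz_row_eq (a b c : R) :
  a * (1 - a) = b * c -> a * conj a + b * conj b = 2 ->
  c * conj a + (1 - a) * conj b = conj z -> b * conj z = 2 - 2 * a.
Proof.
move=> idem E11 E21; rewrite -E21 mulrDr mulrA -idem.
transitivity ((1 - a) * (a * conj a + b * conj b)); first by ring.
by rewrite E11; ring.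
Qed.

Lemma cz_row_conj (a b : R) :
  b * conj z = 2 - 2 * a -> conj b * z = 2 - 2 * conj a.
Proof.
by move=> /(congr1 conj); rewrite rmorphM conjK rmorphB rmorphM rmorph_nat.
Qed.

Lemma cz_formE (a b : R) :
  b * conj z = 2 - 2 * a -> cz_form b = 2 * (a * conj a + b * conj b - 2).
Proof.
move=> bz; have bz' := cz_row_conj bz; apply: reg2.
have zz : (b * conj z) * (conj b * z) = 2 * k * (b * conj b).
  by rewrite mulrACA [conj z * z]mulrC normz mulrC.
transitivity (4 * (b * conj b) + (b * conj z) * (conj b * z)
              - 2 * (b * conj z + conj b * z) - 4).
  by rewrite zz /cz_form; ring.
by rewrite bz bz'; ring.
Qed.

Lemma cz_form_eq0 (a b c : R) :
  a * (1 - a) = b * c -> a * conj a + b * conj b = 2 ->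
  c * conj a + (1 - a) * conj b = conj z -> cz_form b = 0.
Proof.
by move=> idem E11 E21; rewrite (cz_formE (cz_row_eq idem E11 E21)) E11 subrr mulr0.
Qed.

Lemma cz_entries (a b c : R) :
  b * conj z = 2 - 2 * a -> 2 * c = a * conj z -> cz_form b = 0 ->
  a * (1 - a) = b * c /\
  [/\ a * conj a + b * conj b = 2,
      a * conj c + b * (1 - conj a) = z,
      c * conj a + (1 - a) * conj b = conj z &
      c * conj c + (1 - a) * (1 - conj a) = k].
Proof.
move=> bz cz form0; have bz' := cz_row_conj bz.
have cz' : 2 * conj c = conj a * z.
  by move: cz => /(congr1 conj); rewrite !rmorphM conjK rmorph_nat.
have E11 : a * conj a + b * conj b = 2.
  by apply/eqP; rewrite -subr_eq0 -(mulrI_eq0 _ reg2) -(cz_formE bz) form0.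
have E21 : c * conj a + (1 - a) * conj b = conj z.
  apply: reg2; transitivity ((2 * c) * conj a + (2 - 2 * a) * conj b); first by ring.
  by rewrite cz -bz -[in RHS]E11; ring.
split; last split=> //.
- apply: reg2; transitivity (a * (2 - 2 * a)); first by ring.
  by rewrite -bz mulrCA -cz mulrCA.
- move: E21 => /(congr1 conj); rewrite rmorphD !rmorphM rmorphB rmorph1 !conjK => <-.
  by ring.
- apply: reg2; apply: reg2.
  transitivity ((2 * c) * (2 * conj c) + (2 - 2 * a) * (2 - 2 * conj a)); first by ring.
  rewrite cz cz' -bz -bz'.
  transitivity (z * conj z * (a * conj a + b * conj b)); first by ring.
  by rewrite normz E11; ring.
Qed.

End CZFactorization.

Lemma zring_cz_formE D (z b : zring D) (k : int) :
  cz_form (@conjz D) z (zs k) b =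
  ((2 + k) * b.1 ^+ 2 - (2 + k) * D * b.2 ^+ 2 - 2 * z.1 * b.1
   + 2 * z.2 * D * b.2 - 2, 0).
Proof. by case: z b => ? ? [? ?]; congr pair; rewrite /=; ring. Qed.

Lemma mk2_eqP (a b c d a' b' c' d' : zsqrt) :
  mk2 a b c d = mk2 a' b' c' d' <-> [/\ a = a', b = b', c = c' & d = d'].
Proof. by split=> [[-> -> -> ->] | [-> -> -> ->]]. Qed.

Lemma CZ_A2P D (z : zring D) :
  CZ D (A2 D z) <->
  exists a b c : zring D, a * (1 - a) = b * c /\
    [/\ a * conjz a + b * conjz b = 2,
        a * conjz c + b * (1 - conjz a) = z,
        c * conjz a + (1 - a) * conjz b = conjz z &
        c * conjz c + (1 - a) * (1 - conjz a) = zs (znorm D z %/ 2)%Z].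
Proof.
split=> -[a [b [c [idem E]]]]; exists a, b, c; split=> //.
  by case/mk2_eqP: E.
by apply/mk2_eqP; case: E.
Qed.

Lemma int_even_or_odd (x : int) : exists y, x = 2 * y \/ x = 2 * y + 1.
Proof. by exists (x %/ 2)%Z; lia. Qed.

Section Parity.
Variables (D k : int).
Hypotheses (D_mod4 : (D %% 4)%Z = 2) (k_odd : (k %% 2)%Z = 1).

Lemma norm_parity (z1 z2 : int) :
  z1 ^+ 2 - D * z2 ^+ 2 = 2 * k -> exists w n, z1 = 2 * w /\ z2 = 2 * n + 1.
Proof.
have [p Dp] : exists p, D = 4 * p + 2 by exists (D %/ 4)%Z; lia.
have [q kq] : exists q, k = 2 * q + 1 by exists (k %/ 2)%Z; lia.
move=> nz; have [w [z1E|z1E]] := int_even_or_odd z1; last first.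
  by move: nz; rewrite z1E Dp kq; lia.
have [n [z2E|z2E]] := int_even_or_odd z2.
  by move: nz; rewrite z1E z2E Dp kq; lia.
by exists w, n.
Qed.

Lemma cz_form_parity (z1 z2 b1 b2 : int) :
  0 = (2 + k) * b1 ^+ 2 - (2 + k) * D * b2 ^+ 2 - 2 * z1 * b1
      + 2 * z2 * D * b2 - 2 ->
  exists u m, b1 = 2 * u /\ b2 = 2 * m + 1.
Proof.
have [p Dp] : exists p, D = 4 * p + 2 by exists (D %/ 4)%Z; lia.
have [q kq] : exists q, k = 2 * q + 1 by exists (k %/ 2)%Z; lia.
move=> eq; have [u [b1E|b1E]] := int_even_or_odd b1; last first.
  by move: eq; rewrite b1E Dp kq; lia.
have [m [b2E|b2E]] := int_even_or_odd b2.
  by move: eq; rewrite b1E b2E Dp kq; lia.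
by exists u, m.
Qed.

End Parity.

Lemma cz_row_solvable D (z b : zring D) (w n u m : int) :
  (D %% 4)%Z = 2 -> z.1 = 2 * w -> z.2 = 2 * n + 1 ->
  b.1 = 2 * u -> b.2 = 2 * m + 1 ->
  exists a c : zring D, b * conjz z = 2 - 2 * a /\ 2 * c = a * conjz z.
Proof.
move=> D_mod4 z1E z2E b1E b2E.
have [p Dp] : exists p, D = 4 * p + 2 by exists (D %/ 4)%Z; lia.
have [h bzE] : exists h : zring D, b * conjz z = 2 * h.
  by apply: zring_halve; rewrite /= z1E z2E b1E b2E ?Dp; lia.
(* The rational part of h is odd, since b and zbar are both = sqrt D mod 2. *)
have [c czE] : exists c : zring D, (1 - h) * conjz z = 2 * c.
  move: h bzE => [h1 h2] /= [e1 e2]; rewrite z1E z2E b1E b2E Dp in e1.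
  by apply: zring_halve; rewrite /= z1E z2E ?Dp; lia.
by exists (1 - h), c; rewrite bzE czE; split=> //; ring.
Qed.

Theorem corollary3p3 (D : int) (z : zsqrt) (k : int) :
  squarefree D -> (D %% 4)%Z = 2 ->
  zirreducible D (zs 2) -> ~ zprime D (zs 2) ->
  I2 D z -> znorm D z = 2 * k -> (k %% 4)%Z = 3 ->
  (CZ D (A2 D z) <->
   exists b1 b2 : int,
     0 = (2 + k) * b1 ^+ 2 - (2 + k) * D * b2 ^+ 2 - 2 * z.1 * b1
         + 2 * z.2 * D * b2 - 2).
Proof.
move=> _ D_mod4 _ _ _ nz k_mod4.
have normz := mul_conjz nz.
have k_odd : (k %% 2)%Z = 1 by lia.
rewrite CZ_A2P nz mulKz //; split.
- case=> a [b [c [idem [E11 _ E21 _]]]]; exists b.1, b.2.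
  have := cz_form_eq0 conjzK lreg2z normz idem E11 E21.
  by rewrite zring_cz_formE => -[<-].
- case=> b1 [b2 eq]; pose b : zring D := (b1, b2).
  have [w [n [z1E z2E]]] := norm_parity D_mod4 k_odd nz.
  have [u [m [b1E b2E]]] := cz_form_parity D_mod4 k_odd eq.
  have [a [c [bz cz]]] := cz_row_solvable (b := b) D_mod4 z1E z2E b1E b2E.
  have form0 : cz_form (@conjz D) z (zs k) b = 0 by rewrite zring_cz_formE -eq.
  exists a, b, c; exact (cz_entries conjzK lreg2z normz bz cz form0).
Qed.
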